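(* Let $\mathsf{Prop}$ be a non-empty finite set of propositions and $\mathsf{L}$ any fragment of $\mathsf{CTL}(\mathsf{Prop})$. For every sample $\mathcal{S}=(\mathcal{P},\mathcal{N})$ of Kripke structures in $\mathcal{K}(\mathsf{Prop})$, if there is an $\mathcal{S}$-separating $\mathsf{L}$-formula, then there is one of size at most $2^n$, where $n:=\sum_{K\in\mathcal{P}\cup\mathcal{N}}|Q_K|$.
   Context: $\mathsf{CTL}(\mathsf{Prop})$-formulas: $\varphi::=p\mid\neg\varphi\mid\varphi\vee\varphi\mid\varphi\wedge\varphi\mid\mathcal{Q}\mathbf{X}\varphi\mid\mathcal{Q}\mathbf{F}\varphi\mid\mathcal{Q}\mathbf{G}\varphi\mid\mathcal{Q}(\varphi\,\mathbf{U}\,\varphi)$ with $p\in\mathsf{Prop}$, $\mathcal{Q}\in\{\exists,\forall\}$. A fragment is given by a subset of these operators; its formulas use only them. $\mathsf{sz}(\varphi)$ is the number of distinct subformulas. $\mathcal{K}(\mathsf{Prop})$: actionless Kripke structures $K=(Q,I,\delta,P,\pi)$ with $Q=Q_K$ finite non-empty, $I\subseteq Q$ non-empty, $\delta:Q\to2^Q$, $P\subseteq\mathsf{Prop}$, $\pi:Q\to2^P$. $\mathsf{Path}(q)$: infinite $\rho\in q\cdot Q^\omega$ with $\rho[i+1]\in\delta(\rho[i])$ for all $i$. Semantics: $q\models p$ iff $p\in\pi(q)$; Boolean connectives as usual; $q\models\mathcal{Q}\mathbf{X}\varphi$ iff $\mathcal{Q}\rho\in\mathsf{Path}(q)$, $\rho[1]\models\varphi$;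 $q\models\mathcal{Q}\mathbf{F}\varphi$ iff $\mathcal{Q}\rho\in\mathsf{Path}(q)$, $\exists i$, $\rho[i]\models\varphi$; $q\models\mathcal{Q}\mathbf{G}\varphi$ iff $\mathcal{Q}\rho\in\mathsf{Path}(q)$, $\forall i$, $\rho[i]\models\varphi$; $q\models\mathcal{Q}(\varphi_1\mathbf{U}\varphi_2)$ iff $\mathcal{Q}\rho\in\mathsf{Path}(q)$, $\exists i$, $\rho[i]\models\varphi_2$ and $\forall j<i$, $\rho[j]\models\varphi_1$. $K\models\varphi$ iff $q\models\varphi$ for all $q\in I$. A sample is a pair of finite sets of structures; a formula is $\mathcal{S}$-separating if satisfied by all structures in $\mathcal{P}$ and by none in $\mathcal{N}$. *)

From HB Require Import structures.
From Stdlib Require List.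
From mathcomp Require Import all_boot.
Set Implicit Arguments. Unset Strict Implicit. Unset Printing Implicit Defensive.

Section CTL.
Variable AP : finType.

Inductive form :=
| FAtom of AP
| FNot of form
| FOr of form & form
| FAnd of form & form
| FEX of form | FAX of form
| FEF of form | FAF of form
| FEG of form | FAG of form
| FEU of form & form | FAU of form & form.

(* encoding into generic trees, to get decidable equality *)
Fixpoint enc (f : form) : GenTree.tree AP :=
  match f with
  | FAtom p => GenTree.Leaf p
  | FNot a => GenTree.Node 0 [:: enc a]
  | FOr a b => GenTree.Node 1 [:: enc a; enc b]
  | FAnd a b => GenTree.Node 2 [:: enc a; enc b]
  | FEX a => GenTree.Node 3 [:: enc a]
  | FAX a => GenTree.Node 4 [:: enc a]
  | FEF a => GenTree.Node 5 [:: enc a]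
  | FAF a => GenTree.Node 6 [:: enc a]
  | FEG a => GenTree.Node 7 [:: enc a]
  | FAG a => GenTree.Node 8 [:: enc a]
  | FEU a b => GenTree.Node 9 [:: enc a; enc b]
  | FAU a b => GenTree.Node 10 [:: enc a; enc b]
  end.

Fixpoint dec (t : GenTree.tree AP) : option form :=
  match t with
  | GenTree.Leaf p => Some (FAtom p)
  | GenTree.Node n ts =>
    let ds := map dec ts in
    match n, ds with
    | 0, [:: Some a] => Some (FNot a)
    | 1, [:: Some a; Some b] => Some (FOr a b)
    | 2, [:: Some a; Some b] => Some (FAnd a b)
    | 3, [:: Some a] => Some (FEX a)
    | 4, [:: Some a] => Some (FAX a)
    | 5, [:: Some a] => Some (FEF a)
    | 6, [:: Some a] => Some (FAF a)
    | 7, [:: Some a] => Some (FEG a)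
    | 8, [:: Some a] => Some (FAG a)
    | 9, [:: Some a; Some b] => Some (FEU a b)
    | 10, [:: Some a; Some b] => Some (FAU a b)
    | _, _ => None
    end
  end.

Lemma encK : pcancel enc dec.
Proof. by elim=> //= a -> // b ->. Qed.

End CTL.

HB.instance Definition _ (AP : finType) := Equality.copy (form AP) (pcan_type (@encK AP)).

Inductive op := ONot | OOr | OAnd | OEX | OAX | OEF | OAF | OEG | OAG | OEU | OAU.

(* A fragment L is given by a subset of the operators; phi is an L-formula iff
   it uses only operators from L (atomic propositions are always allowed). *)
Fixpoint in_fragment (AP : finType) (L : op -> bool) (f : form AP) : bool :=
  match f with
  | FAtom _ => true
  | FNot a => L ONot && in_fragment L a
  | FOr a b => [&& L OOr, in_fragment L a & in_fragment L b]
  | FAnd a b => [&& L OAnd, in_fragment L a & in_fragment L b]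
  | FEX a => L OEX && in_fragment L a
  | FAX a => L OAX && in_fragment L a
  | FEF a => L OEF && in_fragment L a
  | FAF a => L OAF && in_fragment L a
  | FEG a => L OEG && in_fragment L a
  | FAG a => L OAG && in_fragment L a
  | FEU a b => [&& L OEU, in_fragment L a & in_fragment L b]
  | FAU a b => [&& L OAU, in_fragment L a & in_fragment L b]
  end.

Fixpoint subforms (AP : finType) (f : form AP) : seq (form AP) :=
  f :: match f with
       | FAtom _ => [::]
       | FNot a | FEX a | FAX a | FEF a | FAF a | FEG a | FAG a => subforms a
       | FOr a b | FAnd a b | FEU a b | FAU a b => subforms a ++ subforms b
       end.

Definition sz (AP : finType) (f : form AP) : nat := size (undup (subforms f)).

Record kripke (AP : finType) := Kripke {
  kQ : finType;
  kI : {set kQ};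
  kdelta : kQ -> {set kQ};
  kP : {set AP};
  klab : kQ -> {set AP};
  kI_nonempty : kI != set0;
  klab_sub : forall q, klab q \subset kP
}.

Definition is_path (AP : finType) (K : kripke AP) (q : kQ K) (rho : nat -> kQ K) : Prop :=
  rho 0 = q /\ forall i, rho i.+1 \in kdelta (rho i).

Fixpoint sat (AP : finType) (K : kripke AP) (q : kQ K) (f : form AP) : Prop :=
  match f with
  | FAtom p => p \in klab q
  | FNot a => ~ sat q a
  | FOr a b => sat q a \/ sat q b
  | FAnd a b => sat q a /\ sat q b
  | FEX a => exists rho, is_path q rho /\ sat (rho 1) a
  | FAX a => forall rho, is_path q rho -> sat (rho 1) a
  | FEF a => exists rho, is_path q rho /\ exists i, sat (rho i) a
  | FAF a => forall rho, is_path q rho -> exists i, sat (rho i) a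
  | FEG a => exists rho, is_path q rho /\ forall i, sat (rho i) a
  | FAG a => forall rho, is_path q rho -> forall i, sat (rho i) a
  | FEU a b => exists rho, is_path q rho /\
      exists i, sat (rho i) b /\ forall j, j < i -> sat (rho j) a
  | FAU a b => forall rho, is_path q rho ->
      exists i, sat (rho i) b /\ forall j, j < i -> sat (rho j) a
  end.

Definition models (AP : finType) (K : kripke AP) (f : form AP) : Prop :=
  forall q, q \in kI K -> sat q f.

Definition separating (AP : finType) (Pos Neg : seq (kripke AP)) (f : form AP) : Prop :=
  (forall K, List.In K Pos -> models K f) /\ (forall K, List.In K Neg -> ~ models K f).

Definition sample_size (AP : finType) (Pos Neg : seq (kripke AP)) : nat :=
  \sum_(K <- Pos ++ Neg) #|kQ K|.

From mathcomp Require Import all_boot.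
From mathcomp Require Import boolp.
Set Implicit Arguments. Unset Strict Implicit. Unset Printing Implicit Defensive.

(* Classify the subformulas of a separating formula phi by their truth sets on
   the disjoint union of the states of the sample: there are at most 2^n
   classes.  Represent every class by the top node of one of its subformulas of
   minimal height, whose children are replaced, recursively, by the
   representations of their own classes.  Minimality of the height makes this
   recursion well founded, and since the truth set of a node only depends on the
   truth sets of its children, the resulting formula psi is equivalent to phi on
   the sample and uses only operators of phi.  Every subformula of psi is the
   representation of its own truth set, so psi has at most 2^n distinct
   subformulas. *)

Section Subformulas.
Variable AP : finType.
Implicit Types (f r x y z : form AP) (h : form AP -> form AP).

Definition children f : seq (form AP) :=
  match f with
  | FAtom _ => [::]
  | FNot a | FEX a | FAX a | FEF a | FAF a | FEG a | FAG a => [:: a]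
  | FOr a b | FAnd a b | FEU a b | FAU a b => [:: a; b]
  end.

Definition rebuild r h : form AP :=
  match r with
  | FAtom p => FAtom p
  | FNot a => FNot (h a)
  | FOr a b => FOr (h a) (h b)
  | FAnd a b => FAnd (h a) (h b)
  | FEX a => FEX (h a)
  | FAX a => FAX (h a)
  | FEF a => FEF (h a)
  | FAF a => FAF (h a)
  | FEG a => FEG (h a)
  | FAG a => FAG (h a)
  | FEU a b => FEU (h a) (h b)
  | FAU a b => FAU (h a) (h b)
  end.

Definition top_op f : option op :=
  match f with
  | FAtom _ => None
  | FNot _ => Some ONot
  | FOr _ _ => Some OOr
  | FAnd _ _ => Some OAnd
  | FEX _ => Some OEX
  | FAX _ => Some OAX
  | FEF _ => Some OEF
  | FAF _ => Some OAF
  | FEG _ => Some OEG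
  | FAG _ => Some OAG
  | FEU _ _ => Some OEU
  | FAU _ _ => Some OAU
  end.

Fixpoint height f : nat :=
  match f with
  | FAtom _ => 0
  | FNot a | FEX a | FAX a | FEF a | FAF a | FEG a | FAG a => (height a).+1
  | FOr a b | FAnd a b | FEU a b | FAU a b => (maxn (height a) (height b)).+1
  end.

Lemma children_rebuild r h : children (rebuild r h) = map h (children r).
Proof. by case: r. Qed.

Lemma top_op_rebuild r h : top_op (rebuild r h) = top_op r.
Proof. by case: r. Qed.

Lemma eq_in_rebuild r h1 h2 : {in children r, h1 =1 h2} -> rebuild r h1 = rebuild r h2.
Proof.
by case: r => //= [a|a b|a b|a|a|a|a|a|a|a b|a b] e;
  rewrite !e // !inE eqxx ?orbT.
Qed.

Lemma height_children f c : c \in children f -> height c < height f.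
Proof.
by move: c; apply/allP; case: f => //= *; rewrite ?ltnS ?leqnn ?leq_maxl ?leq_maxr.
Qed.

Lemma form_children_ind (P : form AP -> Prop) :
  (forall f, {in children f, forall c, P c} -> P f) -> forall f, P f.
Proof.
move=> IH f; elim: {f}(height f).+1 {-2}f (ltnSn (height f)) => // n IHn f hf.
apply: IH => c /height_children hc; apply: IHn.
exact: leq_trans hc _.
Qed.

Lemma subformsE f : subforms f = f :: flatten [seq subforms c | c <- children f].
Proof. by case: f => //= *; rewrite cats0. Qed.

Lemma subformsP x f :
  reflect (x = f \/ exists2 c, c \in children f & x \in subforms c) (x \in subforms f).
Proof.
by rewrite subformsE inE; apply: (iffP orP) => -[/eqP|/flatten_mapP]; auto.
Qed.

Lemma subforms_refl f : f \in subforms f.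
Proof. by apply/subformsP; left. Qed.

Lemma child_subforms f c : c \in children f -> c \in subforms f.
Proof. by move=> cf; apply/subformsP; right; exists c; rewrite ?subforms_refl. Qed.

Lemma subforms_trans x y z : x \in subforms y -> y \in subforms z -> x \in subforms z.
Proof.
move=> xy; elim/form_children_ind: z => z IH /subformsP[<- //|[c cz yc]].
by apply/subformsP; right; exists c; last exact: IH.
Qed.

Lemma height_subforms x f : x \in subforms f -> height x <= height f.
Proof.
elim/form_children_ind: f => f IH /subformsP[-> //|[c cf xc]].
by apply: leq_trans (IH c cf xc) (ltnW (height_children cf)).
Qed.

Lemma in_fragmentE L f :
  in_fragment L f =
  (if top_op f is Some o then L o else true) && all (in_fragment L) (children f).
Proof. by case: f => //= *; rewrite ?andbT ?andbA. Qed.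

Lemma in_fragment_rebuild L r h :
  in_fragment L r -> {in children r, forall c, in_fragment L (h c)} ->
  in_fragment L (rebuild r h).
Proof.
rewrite !in_fragmentE top_op_rebuild children_rebuild all_map => /andP[-> _] /= hL.
by apply/allP.
Qed.

Lemma in_fragment_subforms L f x : in_fragment L f -> x \in subforms f -> in_fragment L x.
Proof.
elim/form_children_ind: f => f IH Lf /subformsP[-> //|[c cf xc]].
by apply: (IH c cf) xc; move: Lf; rewrite in_fragmentE => /andP[_ /allP]; apply.
Qed.

Lemma sat_rebuild (K : kripke AP) r h :
  {in children r, forall c (q : kQ K), sat q (h c) <-> sat q c} ->
  forall q : kQ K, sat q (rebuild r h) <-> sat q r.
Proof.
case: r => //= [a|a b|a b|a|a|a|a|a|a|a b|a b] hr q;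
  have ha := hr a (mem_head _ _);
  try have hb := hr b (mem_last a [:: b]);
  by setoid_rewrite ha; try setoid_rewrite hb.
Qed.

End Subformulas.

Section SeqArgmin.
Variables (T : eqType) (x0 : T) (m : T -> nat) (p : pred T).

Definition seq_argmin (s : seq T) : T := head x0 [seq y <- sort (relpre m leq) s | p y].

Lemma seq_argminP s x :
  x \in s -> p x ->
  [/\ seq_argmin s \in s, p (seq_argmin s) & m (seq_argmin s) <= m x].
Proof.
have le_trans : transitive (relpre m leq) by move=> ? ? ? /=; apply: leq_trans.
have le_total : total (relpre m leq) by move=> ? ? /=; apply: leq_total.
move=> xs px; rewrite /seq_argmin.
have := sorted_filter le_trans p (sort_sorted le_total s).
have : x \in [seq y <- sort (relpre m leq) s | p y] by rewrite mem_filter px mem_sort.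
case E: [seq y <- _ | _] => [//|y ys] /= xys /(order_path_min le_trans)/allP ys_ge.
have : y \in [seq y <- sort (relpre m leq) s | p y] by rewrite E mem_head.
rewrite mem_filter mem_sort => /andP[py ys_in]; split=> //.
by move: xys; rewrite inE => /predU1P[-> //|/ys_ge].
Qed.

End SeqArgmin.

Lemma sz_le_card (AP T : finType) (sem : form AP -> T) f :
  {in subforms f &, injective sem} -> sz f <= #|T|.
Proof.
move=> sem_inj; rewrite /sz -(size_map sem).
have /card_uniqP <- : uniq (map sem (undup (subforms f))).
  by rewrite map_inj_in_uniq ?undup_uniq // => x y; rewrite !mem_undup; apply: sem_inj.
exact: max_card.
Qed.

Section Compression.
Variables (AP T : finType) (sem : form AP -> T).
Hypothesis sem_rebuild :
  forall r h, {in children r, forall c, sem (h c) = sem c} -> sem (rebuild r h) = sem r.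
Variable phi : form AP.

Let classes := [seq sem g | g <- subforms phi].

Definition representative (c : T) : form AP :=
  seq_argmin phi (@height AP) (fun g => sem g == c) (subforms phi).

Lemma representative_min g :
  g \in subforms phi -> height (representative (sem g)) <= height g.
Proof.
move=> gphi.
have := seq_argminP phi (@height AP) (p := fun g' => sem g' == sem g) gphi (eqxx _).
by case.
Qed.

Lemma representativeP c :
  c \in classes -> representative c \in subforms phi /\ sem (representative c) = c.
Proof.
case/mapP=> g gphi ->.
have := seq_argminP phi (@height AP) (p := fun g' => sem g' == sem g) gphi (eqxx _).
by case=> ? /eqP.
Qed.

Lemma representative_child c ch :
  c \in classes -> ch \in children (representative c) ->
  sem ch \in classes /\ height (representative (sem ch)) < height (representative c).
Proof.
move=> cC chr; have [rphi _] := representativeP cC.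
have chphi : ch \in subforms phi := subforms_trans (child_subforms chr) rphi.
split; first exact: map_f.
exact: leq_ltn_trans (representative_min chphi) (height_children chr).
Qed.

Lemma height_representative c : c \in classes -> height (representative c) <= height phi.
Proof. by case/representativeP => rphi _; apply: height_subforms. Qed.

Lemma classes_ind (P : T -> Prop) :
  (forall c, c \in classes ->
     (forall ch, ch \in children (representative c) -> P (sem ch)) -> P c) ->
  forall c, c \in classes -> P c.
Proof.
move=> IH c.
elim: {c}(height (representative c)).+1 {-2}c (ltnSn (height (representative c)))
  => // n IHn c hc cC.
apply: IH => // ch chr; have [chC hch] := representative_child cC chr.
by apply: IHn => //; exact: leq_trans hch hc.
Qed.

(* Recursion on the height of [representative c], made structural by the fuel [k]. *)
Fixpoint canon (k : nat) (c : T) : form AP :=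
  if k is k'.+1 then rebuild (representative c) (fun ch => canon k' (sem ch))
  else representative c.

Lemma canon_fuel k k' c :
  c \in classes -> height (representative c) < k -> height (representative c) < k' ->
  canon k c = canon k' c.
Proof.
elim: k k' c => [|k IH] [|k'] c cC // hk hk' /=.
apply: eq_in_rebuild => ch chr; have [chC hch] := representative_child cC chr.
by apply: IH => //; [exact: leq_trans hch hk | exact: leq_trans hch hk'].
Qed.

Definition canonical_form (c : T) : form AP := canon (height phi).+1 c.

Lemma canonical_formE c :
  c \in classes ->
  canonical_form c = rebuild (representative c) (canonical_form \o sem).
Proof.
move=> cC; apply: eq_in_rebuild => ch chr /=.
have [chC hch] := representative_child cC chr.
apply: canon_fuel; rewrite ?ltnS ?height_representative //.
exact: leq_trans hch (height_representative cC).
Qed.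

Lemma sem_canonical_form c : c \in classes -> sem (canonical_form c) = c.
Proof.
move: c; apply: classes_ind => c cC IH.
rewrite canonical_formE // sem_rebuild; first by case: (representativeP cC).
by move=> ch chr; apply: IH.
Qed.

Lemma in_fragment_canonical_form L c :
  in_fragment L phi -> c \in classes -> in_fragment L (canonical_form c).
Proof.
move=> Lphi; move: c; apply: classes_ind => c cC IH.
rewrite canonical_formE //; apply: in_fragment_rebuild => [|ch chr]; last exact: IH.
by case: (representativeP cC) => rphi _; apply: in_fragment_subforms Lphi rphi.
Qed.

Lemma subforms_canonical_form c x :
  c \in classes -> x \in subforms (canonical_form c) -> x = canonical_form (sem x).
Proof.
move: c; apply: classes_ind => c cC IH /subformsP[->|[ch]].
  by rewrite sem_canonical_form.
by rewrite canonical_formE // children_rebuild => /mapP[ch' ch'r ->]; apply: IH.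
Qed.

Theorem exists_sem_eq_sz_le_card L :
  in_fragment L phi ->
  exists psi, [/\ in_fragment L psi, sem psi = sem phi & sz psi <= #|T|].
Proof.
move=> Lphi; have phiC : sem phi \in classes := map_f sem (subforms_refl phi).
exists (canonical_form (sem phi)); split.
- exact: in_fragment_canonical_form.
- exact: sem_canonical_form.
- apply: (@sz_le_card _ _ sem) => x y xs ys exy.
  by rewrite (subforms_canonical_form phiC xs) (subforms_canonical_form phiC ys) exy.
Qed.

End Compression.

Lemma In_nth_ord (T : Type) (x0 : T) (s : seq T) x :
  List.In x s -> exists i : 'I_(size s), nth x0 s i = x.
Proof.
elim: s => //= y s IH [<-|/IH[i <-]]; first by exists ord0.
by exists (lift ord0 i).
Qed.

Fact setT_unit_neq0 : [set: unit] != set0.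
Proof. by apply/set0Pn; exists tt. Qed.

Definition unit_kripke (AP : finType) : kripke AP :=
  @Kripke AP unit setT (fun _ => setT) set0 (fun _ => set0)
    setT_unit_neq0 (fun _ => sub0set _).

Section SampleSemantics.
Variables (AP : finType) (s : seq (kripke AP)).

Definition sample_state := {i : 'I_(size s) & kQ (nth (unit_kripke AP) s i)}.

Definition truth_set (f : form AP) : {ffun sample_state -> bool} :=
  [ffun x => `[< sat (tagged x) f >]].

Lemma truth_setP f g :
  truth_set f = truth_set g <->
  forall (i : 'I_(size s)) (q : kQ (nth (unit_kripke AP) s i)), sat q f <-> sat q g.
Proof.
split=> [E i q | E].
- apply: asbool_eq_equiv.
  have := congr1 (fun F : {ffun sample_state -> bool} => F (existT _ i q)) E.
  by rewrite !ffunE.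
- by apply/ffunP => -[i q]; rewrite !ffunE; apply: asbool_equiv_eq.
Qed.

Lemma truth_set_rebuild r h :
  {in children r, forall c, truth_set (h c) = truth_set c} ->
  truth_set (rebuild r h) = truth_set r.
Proof.
move=> E; apply/truth_setP => i; apply: sat_rebuild => c cr.
by have /truth_setP := E c cr; apply.
Qed.

Lemma truth_set_models f g K :
  truth_set f = truth_set g -> List.In K s -> models K f -> models K g.
Proof.
by move=> /truth_setP E /(In_nth_ord (unit_kripke AP))[i <-] Mf q qI; apply/E/Mf.
Qed.

Lemma card_sample_state : #|{: sample_state}| = \sum_(K <- s) #|kQ K|.
Proof.
by rewrite card_tagged sumnE big_map big_enum /= (big_nth (unit_kripke AP)) big_mkord.
Qed.

End SampleSemantics.

Lemma separating_truth_set (AP : finType) (Pos Neg : seq (kripke AP)) f g :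
  truth_set (Pos ++ Neg) f = truth_set (Pos ++ Neg) g ->
  separating Pos Neg f -> separating Pos Neg g.
Proof.
move=> E [pos neg]; split=> [K KP | K KN Mg].
- by apply: truth_set_models E _ (pos K KP); apply: List.in_or_app; left.
- apply: (neg K KN); apply: truth_set_models (esym E) _ Mg.
  by apply: List.in_or_app; right.
Qed.

Theorem corollary4 (AP : finType) (hAP : 0 < #|AP|) (L : op -> bool)
    (Pos Neg : seq (kripke AP)) :
  (exists f : form AP, in_fragment L f /\ separating Pos Neg f) ->
  exists f : form AP, [/\ in_fragment L f, separating Pos Neg f &
                          sz f <= 2 ^ sample_size Pos Neg].
Proof.
move=> [phi [Lphi sep]].
have [psi [Lpsi Epsi sz_psi]] :=
  exists_sem_eq_sz_le_card (@truth_set_rebuild AP (Pos ++ Neg)) Lphi.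
exists psi; split=> //; first exact: separating_truth_set (esym Epsi) sep.
by rewrite card_ffun card_bool card_sample_state in sz_psi.
Qed.
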